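(* Let $R=\bigoplus_{s\in S}R_s$ be an $S$-graded ring inducing $S$ with $S$ cancellative. Then $R$ is graded von Neumann regular if and only if $R$ is nearly epsilon-strongly graded and $R_e$ is a von Neumann regular ring for every idempotent $e\in S$.
   Context: Rings are associative, not necessarily unital. $S$-graded ring inducing $S$: $S$ a partial groupoid, $R=\bigoplus_{s\in S}R_s$ with additive subgroups, $R_sR_t\subseteq R_{st}$ when $st$ defined, $R_sR_t\ne0$ implies $st$ defined. Convention: $0\in S$, $R_0=0$, $S\setminus\{0\}=\{s:R_s\ne0\}$, undefined products set to $0$, $0$ absorbing. $H_R=\bigcup_sR_s$. $S$ cancellative: $0\ne su=tu$ or $0\ne us=ut$ implies $s=t$. $I(S)$: idempotents. (LRI): for every $s\in S$ there exist $s^{-1}\in S$, $e,f\in I(S)$ with $es=sf=s$, $fs^{-1}=s^{-1}e=s^{-1}$, $ss^{-1}=e$, $s^{-1}s=f$. $R_sR_t$ denotes the additive subgroup generated by products. $R$ is nearly epsilon-strongly graded if $S$ satisfies (LRI) and for every $s$ and $x\in R_s$ there exist $\epsilon(x)\in R_sR_{s^{-1}}$, $\epsilon'(x)\in R_{s^{-1}}R_s$ with $\epsilon(x)x=x=x\epsilon'(x)$. $R$ is graded von Neumann regular if $x\in xRx$ for all $x\in H_R$. *)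

From HB Require Import structures.
From mathcomp Require Import all_boot all_order all_algebra.
Set Implicit Arguments. Unset Strict Implicit. Unset Printing Implicit Defensive.
Import GRing.Theory.
Local Open Scope ring_scope.

Definition nu_ring (V : zmodType) (mul : V -> V -> V) : Prop :=
  associative mul /\ left_distributive mul +%R /\ right_distributive mul +%R.

Definition is_subgroup (V : zmodType) (A : {pred V}) : Prop :=
  0 \in A /\ forall x y, x \in A -> y \in A -> x - y \in A.

(* S-graded ring R = (+)_{s in S} R_s inducing S, with the convention that
   z plays the role of 0 in S (undefined products are z, z absorbing, R_z = 0)
   and S \ {z} = {s | R_s <> 0}. *)
Definition graded_inducing (S : eqType) (op : S -> S -> S) (z : S)
    (V : zmodType) (mul : V -> V -> V) (Rg : S -> {pred V}) : Prop :=
  (forall s, op z s = z /\ op s z = z) /\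
  (forall s, is_subgroup (Rg s)) /\
  (forall x, x \in Rg z -> x = 0) /\
  (forall s, s != z -> exists2 x, x \in Rg s & x != 0) /\
  (forall s t x y, x \in Rg s -> y \in Rg t -> mul x y \in Rg (op s t)) /\
      (forall x, exists l : seq (S * V),
          (forall p, p \in l -> p.2 \in Rg p.1) /\ x = \sum_(p <- l) p.2) /\
      (forall (l : seq S) (xs : S -> V), uniq l ->
          (forall s, s \in l -> xs s \in Rg s) ->
          \sum_(s <- l) xs s = 0 -> forall s, s \in l -> xs s = 0).

Definition cancellative (S : eqType) (op : S -> S -> S) (z : S) : Prop :=
  (forall s t u, op s u != z -> op s u = op t u -> s = t) /\
  (forall s t u, op u s != z -> op u s = op u t -> s = t).

Definition idem (S : Type) (op : S -> S -> S) (e : S) : Prop := op e e = e.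

Definition lri_inv (S : Type) (op : S -> S -> S) (s s' : S) : Prop :=
  exists e f, idem op e /\ idem op f /\ op e s = s /\ op s f = s /\
              op f s' = s' /\ op s' e = s' /\ op s s' = e /\ op s' s = f.

Definition LRI (S : Type) (op : S -> S -> S) : Prop :=
  forall s, exists s', lri_inv op s s'.

(* R_s R_t : the additive subgroup generated by products a b, a in A, b in B. *)
Definition prod_subgroup (V : zmodType) (mul : V -> V -> V) (A B : {pred V})
    (y : V) : Prop :=
  forall P : {pred V}, is_subgroup P ->
    (forall a b, a \in A -> b \in B -> mul a b \in P) -> y \in P.

Definition nearly_epsilon_strongly_graded (S : eqType) (op : S -> S -> S)
    (V : zmodType) (mul : V -> V -> V) (Rg : S -> {pred V}) : Prop :=
  LRI op /\
  forall s, exists s', lri_inv op s s' /\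
    forall x, x \in Rg s ->
      exists eps eps',
        [/\ prod_subgroup mul (Rg s) (Rg s') eps,
            prod_subgroup mul (Rg s') (Rg s) eps',
            mul eps x = x & mul x eps' = x].

Definition graded_vnr (S : Type) (V : zmodType) (mul : V -> V -> V)
    (Rg : S -> {pred V}) : Prop :=
  forall s x, x \in Rg s -> exists r, x = mul (mul x r) x.

Definition vnr_ring (V : zmodType) (mul : V -> V -> V) (A : {pred V}) : Prop :=
  forall x, x \in A -> exists2 y, y \in A & x = mul (mul x y) x.

From mathcomp Require Import all_boot all_order all_algebra.
From mathcomp Require Import boolp.
Set Implicit Arguments. Unset Strict Implicit. Unset Printing Implicit Defensive.
Import GRing.Theory.
Local Open Scope ring_scope.

(* Forward: if x = x r x with x in R_s nonzero, only the components of r of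
   degree t with (s t) s = s survive, and by cancellativity t depends on s
   alone.  The reflexive inverse y x y, of degree s' = (t s) t, makes s' an
   (LRI)-inverse of s, since a nonzero homogeneous element has a unique degree
   and each (LRI) identity is the degree of an identity between nonzero
   products; y x y multiplied by x gives the epsilon elements.
   Backward: if x eps' = x with eps' = sum a_i c_i, a_i in R_s', c_i in R_s,
   the x a_i lie in the right ideal x R_s' of the von Neumann regular ring R_e
   (e = s s'), which has a left unit x b on finitely many of its elements;
   then x b x = x. *)

Section NuRing.
Variables (V : zmodType) (mul : V -> V -> V).
Hypothesis hR : nu_ring mul.

Lemma nu_mulrA a b c : mul a (mul b c) = mul (mul a b) c.
Proof. by case: hR => h _; apply: h. Qed.

Lemma nu_mulDl : left_distributive mul +%R.
Proof. by case: hR => _ []. Qed.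

Lemma nu_mulDr : right_distributive mul +%R.
Proof. by case: hR => _ []. Qed.

Lemma nu_mul0r c : mul 0 c = 0.
Proof. by apply: (addrI (mul 0 c)); rewrite -nu_mulDl !addr0. Qed.

Lemma nu_mulr0 c : mul c 0 = 0.
Proof. by apply: (addrI (mul c 0)); rewrite -nu_mulDr !addr0. Qed.

Lemma nu_mulNr a c : mul (- a) c = - mul a c.
Proof. by apply/eqP; rewrite -addr_eq0 -nu_mulDl addNr nu_mul0r. Qed.

Lemma nu_mulrN a c : mul c (- a) = - mul c a.
Proof. by apply/eqP; rewrite -addr_eq0 -nu_mulDr addNr nu_mulr0. Qed.

Lemma nu_mulrBl a b c : mul (a - b) c = mul a c - mul b c.
Proof. by rewrite nu_mulDl nu_mulNr. Qed.

Lemma nu_mulrBr a b c : mul c (a - b) = mul c a - mul c b.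
Proof. by rewrite nu_mulDr nu_mulrN. Qed.

Lemma nu_mulr_suml I (r : seq I) (P : pred I) F c :
  mul (\sum_(i <- r | P i) F i) c = \sum_(i <- r | P i) mul (F i) c.
Proof.
exact: (big_morph (mul^~ c) (fun a b => nu_mulDl a b c) (nu_mul0r c)).
Qed.

Lemma nu_mulr_sumr I (r : seq I) (P : pred I) F c :
  mul c (\sum_(i <- r | P i) F i) = \sum_(i <- r | P i) mul c (F i).
Proof. exact: (big_morph (mul c) (nu_mulDr c) (nu_mulr0 c)). Qed.

Lemma reflexive_of_inner_inverse x y : x = mul (mul x y) x ->
  let y' := mul (mul y x) y in
  x = mul (mul x y') x /\ y' = mul (mul y' x) y'.
Proof.
move=> xyx y'; have xyxl w : mul (mul (mul w x) y) x = mul w x.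
  by rewrite -!nu_mulrA [mul x (mul y x)]nu_mulrA -xyx.
by rewrite /y' !nu_mulrA !xyxl.
Qed.

Lemma prod_subgroup_sum (A B : {pred V}) y :
  is_subgroup A -> prod_subgroup mul A B y ->
  exists2 l : seq (V * V), all (fun p => (p.1 \in A) && (p.2 \in B)) l
    & y = \sum_(p <- l) mul p.1 p.2.
Proof.
move=> [A0 AB].
pose sums w := exists2 l : seq (V * V),
  all (fun p => (p.1 \in A) && (p.2 \in B)) l & w = \sum_(p <- l) mul p.1 p.2.
move/(_ [pred w | `[< sums w >]]) => hy; apply/asboolP/hy => [|a b ha hb].
- split; first by apply/asboolP; exists [::]; rewrite ?big_nil.
  move=> u v /asboolP[l1 hl1 ->] /asboolP[l2 hl2 ->]; apply/asboolP.
  exists (l1 ++ [seq (- p.1, p.2) | p <- l2]).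
    rewrite all_cat hl1 all_map; apply/allP => p /(allP hl2) /andP[pA pB] /=.
    by rewrite pB -sub0r AB.
  rewrite big_cat big_map /= -sumrN; congr (_ + _).
  by apply: eq_bigr => p _; rewrite nu_mulNr.
- by apply/asboolP; exists [:: (a, b)]; rewrite /= ?ha ?hb ?big_seq1.
Qed.

Lemma local_left_unit (A : {pred V}) (J : V -> Prop) :
  vnr_ring mul A -> J 0 -> (forall u v, J u -> J v -> J (u - v)) ->
  (forall u, J u -> u \in A) -> (forall u a, J u -> a \in A -> J (mul u a)) ->
  forall vs : seq V, (forall v, v \in vs -> J v) ->
  exists2 g, J g & forall v, v \in vs -> mul g v = v.
Proof.
move=> vnrA J0 JB JA JM; elim=> [|c vs IH] Jvs; first by exists 0.
have [|g Jg gvs] := IH.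
  by move=> v vs_v; apply: Jvs; rewrite inE vs_v orbT.
have Jc : J c by apply: Jvs; rewrite mem_head.
(* If d = d y d, then d y + g - d y g still fixes what g fixes, and fixes c. *)
pose d := c - mul g c.
have Jd : J d by apply: JB => //; apply: JM => //; apply: JA.
have [y Ay dyd] := vnrA d (JA _ Jd).
have Jdy : J (mul d y) by apply: JM.
have mulgE v : mul (mul d y - (mul (mul d y) g - g)) v
    = mul (mul d y) v - (mul (mul d y) (mul g v) - mul g v).
  by rewrite nu_mulrBl (nu_mulrBl (mul (mul d y) g)) nu_mulrA.
exists (mul d y - (mul (mul d y) g - g)).
  exact: JB Jdy (JB _ _ (JM _ _ Jdy (JA _ Jg)) Jg).
move=> v; rewrite inE => /predU1P[->|/gvs gv]; last by rewrite mulgE gv subKr.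
by rewrite mulgE opprB addrCA -nu_mulrBr -dyd /d addrC subrK.
Qed.

Section Graded.
Variables (S : eqType) (op : S -> S -> S) (z : S) (Rg : S -> {pred V}).
Hypothesis hgr : graded_inducing op z mul Rg.

Lemma op_z_l s : op z s = z.
Proof. by case: hgr => h _; case: (h s). Qed.

Lemma grade_subgroup s : is_subgroup (Rg s).
Proof. by case: hgr => _ [h _]; apply: h. Qed.

Lemma grade0 s : 0 \in Rg s.
Proof. by case: (grade_subgroup s). Qed.

Lemma gradeB s a b : a \in Rg s -> b \in Rg s -> a - b \in Rg s.
Proof. by case: (grade_subgroup s) => _; apply. Qed.

Lemma gradeN s a : a \in Rg s -> - a \in Rg s.
Proof. by move=> ha; rewrite -sub0r gradeB ?grade0. Qed.

Lemma gradeM s t a b : a \in Rg s -> b \in Rg t -> mul a b \in Rg (op s t).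
Proof. by case: hgr => _ [_ [_ [_ [h _]]]]; apply: h. Qed.

Lemma grade_sum (I : eqType) (r : seq I) (P : pred I) (F : I -> V) s :
  (forall i, i \in r -> P i -> F i \in Rg s) ->
  \sum_(i <- r | P i) F i \in Rg s.
Proof.
move=> hF; rewrite big_seq_cond; apply: (big_ind (fun a => a \in Rg s)).
- exact: grade0.
- by move=> a b ha hb; rewrite -[b]opprK gradeB ?gradeN.
- by move=> i /andP[]; apply: hF.
Qed.

Lemma eq0_of_grade_z x : x \in Rg z -> x = 0.
Proof. by case: hgr => _ [_ [h _]]; apply: h. Qed.

Lemma exists_nonzero_of_grade s : s != z -> exists2 x, x \in Rg s & x != 0.
Proof. by case: hgr => _ [_ [_ [h _]]]; apply: h. Qed.

Lemma homogeneous_decomposition x : exists2 l : seq (S * V),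
  (forall p, p \in l -> p.2 \in Rg p.1) & x = \sum_(p <- l) p.2.
Proof. by case: hgr => _ [_ [_ [_ [_ [/(_ x)[l []]]]]]]; exists l. Qed.

Lemma grade_direct (l : seq S) (xs : S -> V) : uniq l ->
  (forall s, s \in l -> xs s \in Rg s) ->
  \sum_(s <- l) xs s = 0 -> forall s, s \in l -> xs s = 0.
Proof. by case: hgr => _ [_ [_ [_ [_ [_ h]]]]]; apply: h. Qed.

Lemma neq_z_of_grade s x : x \in Rg s -> x != 0 -> s != z.
Proof.
by move=> hx; apply: contra_neq => sz; apply: eq0_of_grade_z; rewrite -sz.
Qed.

Lemma grade_unique a b x : x \in Rg a -> x \in Rg b -> x != 0 -> a = b.
Proof.
move=> ha hb nx; apply/eqP/negP => /negP nab; move/eqP: nx; apply.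
pose xs u := if u == a then x else - x.
have uab : uniq [:: a; b] by rewrite /= inE nab.
have xs_grade u : u \in [:: a; b] -> xs u \in Rg u.
  rewrite !inE /xs => /orP[]/eqP->; rewrite ?eqxx //.
  by rewrite eq_sym (negbTE nab) gradeN.
have xs_sum : \sum_(u <- [:: a; b]) xs u = 0.
  by rewrite big_cons big_seq1 /xs eqxx eq_sym (negbTE nab) subrr.
by have := grade_direct uab xs_grade xs_sum (mem_head _ _); rewrite /xs eqxx.
Qed.

Lemma homogeneous_component (l : seq (S * V)) w s : w \in Rg s ->
  (forall p, p \in l -> p.2 \in Rg p.1) -> w = \sum_(p <- l) p.2 ->
  w = \sum_(p <- l | p.1 == s) p.2.
Proof.
move=> hw hl wE; pose L := undup (s :: map fst l).
have sL : s \in L by rewrite mem_undup mem_head.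
have lL p : p \in l -> p.1 \in L.
  by move=> hp; rewrite mem_undup inE map_f ?orbT.
pose xs u := \sum_(p <- l | p.1 == u) p.2 - (if u == s then w else 0).
have xs_grade u : u \in L -> xs u \in Rg u.
  move=> _; apply: gradeB.
    by apply: grade_sum => p hp /eqP <-; apply: hl.
  by case: eqP => [->|_]; rewrite ?grade0.
have xs_sum : \sum_(u <- L) xs u = 0.
  rewrite sumrB -big_mkcond -big_filter filter_pred1_uniq ?undup_uniq //.
  rewrite big_seq1.
  apply/eqP; rewrite subr_eq0 {1}wE; apply/eqP.
  under eq_bigr => u _ do rewrite big_mkcond.
  rewrite exchange_big /= big_seq [RHS]big_seq; apply: eq_bigr => p hp.
  rewrite -big_mkcond /= (eq_bigl (pred1 p.1)) => [|u]; last first.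
    by rewrite /= eq_sym.
  by rewrite -big_filter filter_pred1_uniq ?undup_uniq ?lL // big_seq1.
have := grade_direct (undup_uniq _) xs_grade xs_sum sL.
by rewrite /xs eqxx => /eqP; rewrite subr_eq0 => /eqP.
Qed.

Hypothesis hcanc : cancellative op z.

Lemma cancel_sandwich s a b :
  s != z -> op (op s a) s = s -> op (op s b) s = s -> a = b.
Proof.
move=> sz sas sbs; case: hcanc => cancr cancl.
have sa_sb : op s a = op s b by apply: (cancr _ _ s); rewrite ?sas ?sbs.
apply: (cancl _ _ s _ sa_sb).
by apply: contra_neq sz => saz; rewrite -sas saz op_z_l.
Qed.

Lemma homogeneous_inner_inverse s x r : x \in Rg s -> x != 0 ->
  x = mul (mul x r) x ->
  exists t, op (op s t) s = s /\ exists2 y, y \in Rg t & x = mul (mul x y) x.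
Proof.
move=> hx nx; have [l hl ->] := homogeneous_decomposition r => xrx.
pose deg (p : S * V) := op (op s p.1) s.
have xE : x = \sum_(p <- l | deg p == s) mul (mul x p.2) x.
  pose l' := [seq (deg p, mul (mul x p.2) x) | p <- l].
  have := homogeneous_component (l := l') hx.
  rewrite !big_map; apply; last by rewrite -nu_mulr_suml -nu_mulr_sumr.
  by move=> q /mapP[p hp ->]; exact: (gradeM (gradeM hx (hl p hp)) hx).
have [/hasP[p0 hp0 /eqP dp0] | /hasPn nodeg] :=
  boolP (has (fun p => deg p == s) l).
  exists p0.1; split => //; exists (\sum_(p <- l | deg p == s) p.2).
    apply: grade_sum => p hp /eqP dp.
    by rewrite (cancel_sandwich (neq_z_of_grade hx nx) dp0 dp); apply: hl.
  by rewrite nu_mulr_sumr nu_mulr_suml.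
by move/eqP: nx; rewrite xE big1_seq // => p /andP[dp /nodeg]; rewrite dp.
Qed.

Lemma graded_vnr_uniform s : graded_vnr mul Rg -> s != z ->
  exists t, op (op s t) s = s /\
    forall x, x \in Rg s -> exists2 y, y \in Rg t & x = mul (mul x y) x.
Proof.
move=> hv sz; have [x0 hx0 nx0] := exists_nonzero_of_grade sz.
have [r0 /(homogeneous_inner_inverse hx0 nx0)[t [sts _]]] := hv _ _ hx0.
exists t; split => // x hx; have [->|nx] := eqVneq x 0.
  by exists 0; rewrite ?grade0 ?nu_mulr0.
have [r /(homogeneous_inner_inverse hx nx)[u [sus inner]]] := hv _ _ hx.
by rewrite -(cancel_sandwich sz sus sts).
Qed.

Lemma lri_inv_of_reflexive s s' x y : x \in Rg s -> y \in Rg s' -> x != 0 ->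
  x = mul (mul x y) x -> y = mul (mul y x) y -> lri_inv op s s'.
Proof.
move=> hx hy nx xyx yxy.
have nxy : mul x y != 0.
  by apply: contra_neq nx => xy0; rewrite xyx xy0 nu_mul0r.
have nyx : mul y x != 0.
  by apply: contra_neq nx => yx0; rewrite xyx -nu_mulrA yx0 nu_mulr0.
have ny : y != 0 by apply: contra_neq nxy => ->; rewrite nu_mulr0.
have hxy := gradeM hx hy; have hyx := gradeM hy hx.
exists (op s s'), (op s' s); rewrite /idem; do !split.
- apply: (grade_unique _ hxy nxy).
  by rewrite {1}xyx -nu_mulrA; exact: (gradeM hxy hxy).
- apply: (grade_unique _ hyx nyx).
  by rewrite {1}yxy -nu_mulrA; exact: (gradeM hyx hyx).
- by apply: (grade_unique _ hx nx); rewrite {1}xyx; exact: (gradeM hxy hx).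
- apply: (grade_unique _ hx nx).
  by rewrite {1}xyx -nu_mulrA; exact: (gradeM hx hyx).
- by apply: (grade_unique _ hy ny); rewrite {1}yxy; exact: (gradeM hyx hy).
- apply: (grade_unique _ hy ny).
  by rewrite {1}yxy -nu_mulrA; exact: (gradeM hy hxy).
Qed.

Lemma epsilon_data_of_graded_vnr s : graded_vnr mul Rg ->
  exists s', lri_inv op s s' /\
    forall x, x \in Rg s -> exists eps eps',
      [/\ prod_subgroup mul (Rg s) (Rg s') eps,
          prod_subgroup mul (Rg s') (Rg s) eps',
          mul eps x = x & mul x eps' = x].
Proof.
move=> hv; have [->|sz] := eqVneq s z.
  exists z; split; first by exists z, z; rewrite /idem op_z_l.
  move=> x /eq0_of_grade_z ->; exists 0, 0.
  by split; rewrite ?nu_mulr0 // => P [].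
have [t [_ inner]] := graded_vnr_uniform hv sz.
have [x0 hx0 nx0] := exists_nonzero_of_grade sz.
have [y0 hy0 /reflexive_of_inner_inverse[x0y'x0 y'x0y']] := inner x0 hx0.
exists (op (op t s) t); split.
  apply: (lri_inv_of_reflexive hx0 _ nx0 x0y'x0 y'x0y').
  exact: (gradeM (gradeM hy0 hx0) hy0).
move=> x hx; have [y hy /reflexive_of_inner_inverse[xy'x _]] := inner x hx.
have hy' := gradeM (gradeM hy hx) hy.
exists (mul x (mul (mul y x) y)), (mul (mul (mul y x) y) x); split.
- by move=> P _ /(_ _ _ hx hy').
- by move=> P _ /(_ _ _ hy' hx).
- by rewrite -xy'x.
- by rewrite nu_mulrA -xy'x.
Qed.

Lemma vnr_idempotent_of_graded_vnr e : graded_vnr mul Rg -> idem op e ->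
  vnr_ring mul (Rg e).
Proof.
move=> hv ee; have [->|ez] := eqVneq e z.
  by move=> x /eq0_of_grade_z ->; exists 0; rewrite ?grade0 ?nu_mulr0.
have [t [ete inner]] := graded_vnr_uniform hv ez.
have eee : op (op e e) e = e by rewrite !ee.
by rewrite (cancel_sandwich ez ete eee) in inner.
Qed.

Lemma graded_vnr_of_nearly_epsilon :
  nearly_epsilon_strongly_graded op mul Rg ->
  (forall e, idem op e -> vnr_ring mul (Rg e)) -> graded_vnr mul Rg.
Proof.
move=> [_ hn] vnr_e s x hx.
have [s' [[e [_ [ee [_ [_ [_ [_ [s'e [ss' _]]]]]]]]] heps]] := hn s.
have [_ [eps' [_ heps' _ xeps']]] := heps x hx.
have [l hl eps'E] := prod_subgroup_sum (grade_subgroup s') heps'.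
pose J w := exists2 b, b \in Rg s' & w = mul x b.
have J0 : J 0 by exists 0; rewrite ?grade0 ?nu_mulr0.
have JB u v : J u -> J v -> J (u - v).
  by move=> [b hb ->] [c hc ->]; exists (b - c); rewrite ?gradeB ?nu_mulrBr.
have JA u : J u -> u \in Rg e by move=> [b hb ->]; rewrite -ss'; exact: gradeM.
have JM u a : J u -> a \in Rg e -> J (mul u a).
  move=> [b hb ->] ha; exists (mul b a); rewrite ?nu_mulrA //.
  by rewrite -s'e; exact: gradeM.
have Jl v : v \in [seq mul x p.1 | p <- l] -> J v.
  by move=> /mapP[p /(allP hl)/andP[hp _] ->]; exists p.1.
have [_ [b _ ->] g_unit] := local_left_unit (vnr_e e ee) J0 JB JA JM Jl.
have xE : x = \sum_(p <- l) mul (mul x p.1) p.2.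
  rewrite -{1}xeps' eps'E nu_mulr_sumr.
  by apply: eq_bigr => p _; rewrite nu_mulrA.
exists b; rewrite {3}xE nu_mulr_sumr {1}xE !big_seq; apply: eq_bigr => p hp.
by rewrite nu_mulrA g_unit // map_f.
Qed.

End Graded.
End NuRing.

Theorem theorem4p10 (S : eqType) (op : S -> S -> S) (z : S)
    (V : zmodType) (mul : V -> V -> V) (Rg : S -> {pred V})
    (hR : nu_ring mul) (hgr : graded_inducing op z mul Rg)
    (hcanc : cancellative op z) :
  graded_vnr mul Rg <->
  (nearly_epsilon_strongly_graded op mul Rg /\
   forall e, idem op e -> vnr_ring mul (Rg e)).
Proof.
split=> [hv | [hn vnr_e]]; last first.
  exact: (graded_vnr_of_nearly_epsilon hR hgr hn vnr_e).
have heps s := epsilon_data_of_graded_vnr hR hgr hcanc s hv.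
split; last by move=> e; apply: (vnr_idempotent_of_graded_vnr hR hgr hcanc).
by split=> // s; have [s' [hs _]] := heps s; exists s'.
Qed.
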